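(* Let $X$ be a separable Banach space, $Y$ a closed subspace of $X$, $\xi: Y\to X$ the identical embedding, and $\Gamma$ a linear (not necessarily closed) subspace of $Y^{*}$. Then for every ordinal $\alpha$ we have $(\xi^{*})^{-1}(\Gamma_{(\alpha)}) = \big((\xi^{*})^{-1}\Gamma\big)_{(\alpha)}$, where $\xi^*: X^*\to Y^*$ is the adjoint (restriction) operator.
   Context: For a Banach space $Z$ and a subset $\Gamma\subset Z^*$, the weak$^*$-derived set $\Gamma_{(1)}$ is the set of all limits of weak$^*$-convergent sequences of elements of $\Gamma$. Weak$^*$-derived sets of arbitrary ordinal order are defined inductively by $\Gamma_{(0)}=\Gamma$ and $\Gamma_{(\alpha)}=\bigcup_{\beta<\alpha}(\Gamma_{(\beta)})_{(1)}$ for $\alpha\ge 1$. *)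

From HB Require Import structures.
From mathcomp Require Import all_boot all_order all_algebra.
From mathcomp Require Import all_classical all_reals all_analysis.
Set Implicit Arguments. Unset Strict Implicit. Unset Printing Implicit Defensive.
Import Order.TTheory GRing.Theory Num.Theory.
Import numFieldNormedType.Exports.
Local Open Scope classical_set_scope.
Local Open Scope ring_scope.

Section Defs.
Variable R : realType.

Definition is_linear_map (U W : lmodType R) (f : U -> W) : Prop :=
  forall (a : R) (u v : U), f (a *: u + v) = a *: f u + f v.

Definition is_dual (V : normedModType R) (f : V -> R) : Prop :=
  (forall (a : R) (u v : V), f (a *: u + v) = a * f u + f v) /\ continuous f.

Definition dual_subspace (V : normedModType R) (G : set (V -> R)) : Prop :=
  G `<=` (@is_dual V) /\ G (fun _ => 0) /\
  (forall f g, G f -> G g -> G (fun v => f v + g v)) /\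
  (forall (a : R) f, G f -> G (fun v => a * f v)).

Definition separable (X : normedModType R) : Prop :=
  exists D : set X, countable D /\ closure D = setT.

Definition wstar_derived1 (V : normedModType R) (G : set (V -> R)) : set (V -> R) :=
  [set f | is_dual f /\
     exists u : nat -> V -> R, (forall n, G (u n)) /\
       forall v, (fun n => u n v) @ \oo --> f v].

(* weak*-derived set of order alpha, where alpha ranges over a well-ordered
   type (O, lt): G_(alpha) = G if alpha is minimal (alpha = 0), and
   G_(alpha) = \bigcup_{beta < alpha} (G_(beta))_(1) otherwise. *)
Definition wstar_derived (V : normedModType R) (O : Type) (lt : O -> O -> Prop)
  (wf : well_founded lt) (G : set (V -> R)) : O -> set (V -> R) :=
  Fix wf (fun _ => set (V -> R))
    (fun a rec =>
       [set f | ((forall b, ~ lt b a) /\ G f) \/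
                exists b (h : lt b a), wstar_derived1 (rec b h) f]).

Definition adj_preimage (X Y : normedModType R) (xi : Y -> X) (G : set (Y -> R))
  : set (X -> R) :=
  [set f | is_dual f /\ G (f \o xi)].

Definition strict_well_order (O : Type) (lt : O -> O -> Prop) : Prop :=
  (forall a b c, lt a b -> lt b c -> lt a c) /\
  (forall a b, lt a b \/ a = b \/ lt b a) /\
  (forall a, ~ lt a a).

End Defs.

From HB Require Import structures.
From mathcomp Require Import all_boot all_order all_algebra.
From mathcomp Require Import all_classical all_reals all_analysis.
From mathcomp Require Import lra.
Import Order.TTheory GRing.Theory Num.Theory.
Import numFieldNormedType.Exports.
Set Implicit Arguments.
Unset Strict Implicit.
Unset Printing Implicit Defensive.
Local Open Scope classical_set_scope.
Local Open Scope ring_scope.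

(* The inclusion from right to left holds because restriction along xi maps
   weak*-convergent sequences to weak*-convergent sequences.  For the other
   inclusion, by well-founded induction it suffices to lift one sequence: if
   g_n --> f \o xi weak* in Y^* with f in X^*, we need f_n in X^* with
   f_n \o xi = g_n and f_n --> f weak*.  As Y is complete, Banach-Steinhaus
   bounds u_n = g_n - f \o xi by a common C, and Hahn-Banach extends u_n to
   h_n in X^* with ||h_n|| <= C.  The C-ball of X^* is compact for the
   pointwise topology (Tychonoff), and every cluster point of (h_n) annihilates
   xi(Y) because u_n --> 0; hence, on any finite part of a dense sequence,
   h_n is eventually close to the C-ball of the annihilator.  A diagonal
   choice gives k_n in that ball with h_n - k_n --> 0 on the dense sequence,
   hence everywhere by equicontinuity, and f_n = f + h_n - k_n works. *)

Section LinearMaps.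
Variables (R : realType) (U V W : lmodType R) (f g : V -> W) (h : U -> V).
Hypotheses (flin : is_linear_map f) (glin : is_linear_map g) (hlin : is_linear_map h).

#[local] HB.instance Definition _ := GRing.isLinear.Build R V W _ f flin.
#[local] HB.instance Definition _ := GRing.isLinear.Build R V W _ g glin.
#[local] HB.instance Definition _ := GRing.isLinear.Build R U V _ h hlin.

Lemma is_linear_map0 : f 0 = 0. Proof. exact: linear0. Qed.
Lemma is_linear_mapN u : f (- u) = - f u. Proof. exact: linearN. Qed.
Lemma is_linear_mapB u v : f (u - v) = f u - f v. Proof. exact: linearB. Qed.
Lemma is_linear_mapZ a u : f (a *: u) = a *: f u. Proof. exact: linearZ. Qed.

Lemma is_linear_map_add : is_linear_map (f \+ g). Proof. exact: linearP. Qed.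
Lemma is_linear_map_sub : is_linear_map (f \- g). Proof. exact: linearP. Qed.
Lemma is_linear_map_comp : is_linear_map (f \o h). Proof. exact: linearP. Qed.

End LinearMaps.

Lemma is_linear_map_cst0 (R : realType) (V W : lmodType R) :
  is_linear_map (fun _ : V => 0 : W).
Proof. by move=> a u v; rewrite scaler0 addr0. Qed.

Section BoundedLinearMaps.
Variables (R : realType) (V W : normedModType R) (f : V -> W).
Hypothesis flin : is_linear_map f.

#[local] HB.instance Definition _ := GRing.isLinear.Build R V W _ f flin.

Lemma continuous_linear_norm_le :
  continuous f -> exists2 C, 0 < C & forall x, `|f x| <= C * `|x|.
Proof.
move=> /linear_bounded_continuous /linear_boundedP /pinfty_ex_gt0[C C0 fC].
by exists C.
Qed.

Lemma linear_norm_le_continuous (C : R) :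
  (forall x, `|f x| <= C * `|x|) -> continuous f.
Proof.
move=> fC; apply/linear_bounded_continuous/linear_boundedP.
near=> r => x; apply: (le_trans (fC x)); apply: ler_wpM2r => //.
Unshelve. all: by end_near. Qed.

End BoundedLinearMaps.

Section Duals.
Variables (R : realType) (V : normedModType R).
Implicit Types f g : V -> R.

Lemma is_dual_le_norm f (C : R) :
  is_linear_map f -> (forall x, `|f x| <= C * `|x|) -> is_dual f.
Proof. by move=> flin fC; split => //; exact: linear_norm_le_continuous fC. Qed.

Lemma is_dual_add f g : is_dual f -> is_dual g -> is_dual (f \+ g).
Proof.
move=> [flin fcont] [glin gcont]; split; first exact: is_linear_map_add.
by move=> x; exact: continuousD (fcont x) (gcont x).
Qed.

Lemma is_dual_sub f g : is_dual f -> is_dual g -> is_dual (f \- g).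
Proof.
move=> [flin fcont] [glin gcont]; split; first exact: is_linear_map_sub.
by move=> x; exact: continuousB (fcont x) (gcont x).
Qed.

Lemma is_dual_comp (U : normedModType R) f (xi : U -> V) :
  is_dual f -> is_linear_map xi -> continuous xi -> is_dual (f \o xi).
Proof.
move=> [flin fcont] xilin xicont; split; first exact: is_linear_map_comp.
by move=> x; exact: continuous_comp (xicont x) (fcont _).
Qed.

End Duals.

Definition complete_space (R : realType) (T : normedModType R) : Prop :=
  forall F : set_system T, ProperFilter F -> cauchy F -> cvg F.

(* [Y] with the complete normed structure given by a proof of completeness,
   so that Banach-Steinhaus applies to it. *)
Definition completed (R : realType) (Y : normedModType R) (hY : complete_space Y)
  : Type := Y.
HB.instance Definition _ (R : realType) (Y : normedModType R) (hY : complete_space Y) :=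
  NormedModule.on (completed hY).
HB.instance Definition _ (R : realType) (Y : normedModType R) (hY : complete_space Y) :=
  Uniform_isComplete.Build (completed hY) hY.

Section Completeness.
Variables (R : realType) (X : completeNormedModType R) (Y : normedModType R).
Variable xi : Y -> X.
Hypotheses (xilin : is_linear_map xi) (xiiso : forall y, `|xi y| = `|y|).

Let ball_xi (y z : Y) (eps : R) : ball (xi y) eps (xi z) = ball y eps z.
Proof. by rewrite -!ball_normE /= -is_linear_mapB // xiiso. Qed.

Lemma isometry_closed_range_complete : closed (range xi) -> complete_space Y.
Proof.
move=> xicl F FF /cauchyP Fcauchy.
have /cauchy_cvg/cvg_ex[l xiFl] : cauchy (xi @ F).
  apply: cauchy_exP => eps eps0; have [y Fy] := Fcauchy eps eps0.
  by exists (xi y); apply: (@filterS _ F) Fy => z; rewrite /= ball_xi.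
have [y _ yl] : range xi l.
  by apply: closed_cvg xiFl => //; apply: nearW => y; exists y.
subst l.
apply/cvg_ex; exists y; apply/fcvg_ballP => eps eps0.
by apply: filterS (cvg_ball xiFl eps0) => z; rewrite /= ball_xi.
Qed.

End Completeness.

Lemma uniform_boundedness (R : realType) (Y W : normedModType R)
    (hY : complete_space Y) (u : nat -> Y -> W) :
  (forall n, is_linear_map (u n)) -> (forall n, continuous (u n)) ->
  (forall y, exists M, forall n, `|u n y| <= M) ->
  exists2 C, 0 < C & forall n y, `|u n y| <= C * `|y|.
Proof.
move=> ulin ucont ubd.
have /(_ 1)[M uM] : uniform_bounded (range u : set (completed hY -> W)).
  apply: (@Banach_Steinhauss R (completed hY) W (range u)).
    move=> _ [n _ <-]; split; last exact: ulin.
    have [C C0 uC] := continuous_linear_norm_le (ulin n) (ucont n).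
    move=> r; exists (C * r) => y yr; apply: (le_trans (uC y)).
    by rewrite ler_wpM2l // ltW.
  by move=> y; have [M uM] := ubd y; exists M => _ [n _ <-].
exists (`|M| + 1); first by rewrite ltr_wpDl.
move=> n y; have [->|y0] := eqVneq y 0.
  by rewrite is_linear_map0 // !normr0 mulr0.
have ny : 0 < `|y| by rewrite normr_gt0.
have := uM (u n) (ex_intro2 _ _ n I erefl) (`|y|^-1 *: y).
rewrite normrZ normfV normr_id mulVf ?gt_eqF // lexx => /(_ isT).
rewrite is_linear_mapZ // normrZ normfV normr_id ler_pdivrMl // => uny.
apply: (le_trans uny); rewrite mulrC ler_wpM2r ?ltW //.
by rewrite (le_lt_trans (ler_norm M)) // ltrDl.
Qed.

Lemma separable_dense_seq (R : realType) (X : normedModType R) : separable X ->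
  exists e : nat -> X, forall x eps, 0 < eps -> exists i, `|x - e i| < eps.
Proof.
move=> [D [Dcount Ddense]]; have [e De] := pcard_surjP Dcount.
exists e => x eps eps0.
have : closure D x by rewrite Ddense.
move=> /(_ _ (nbhsx_ballx x eps eps0))[_ [/De[i _ <-]]].
by rewrite -ball_normE; exists i.
Qed.

Lemma equibounded_cvg0_dense (R : realType) (X : normedModType R) (e : nat -> X)
    (w : nat -> X -> R) (C : R) :
  (forall x eps, 0 < eps -> exists i, `|x - e i| < eps) ->
  (forall n, is_linear_map (w n)) -> (forall n x, `|w n x| <= C * `|x|) ->
  (forall i, w n (e i) @[n --> \oo] --> 0) -> forall x, w n x @[n --> \oo] --> 0.
Proof.
move=> edense wlin wC we x; apply/cvgrPdist_lt => eps eps0.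
have eps2 : 0 < eps / 2 by rewrite divr_gt0.
have C1 : 0 < `|C| + 1 by rewrite ltr_wpDl.
have [i xei] := edense x (eps / 2 / (`|C| + 1)) (divr_gt0 eps2 C1).
have wxei n : `|w n (x - e i)| < eps / 2.
  apply: (le_lt_trans (wC n _)); apply: (@le_lt_trans _ _ ((`|C| + 1) * `|x - e i|)).
    by apply: ler_wpM2r => //; apply: (le_trans (ler_norm C)); rewrite lerDl.
  by rewrite mulrC -ltr_pdivlMr.
have /cvgrPdist_lt /(_ _ eps2) := we i; apply: filterS => n.
rewrite !sub0r !normrN => wei.
have -> : w n x = w n (x - e i) + w n (e i) by rewrite is_linear_mapB // subrK.
by rewrite (splitr eps); apply: (le_lt_trans (ler_normD _ _)); apply: ltrD.
Qed.

Lemma diagonal_index (P : nat -> nat -> Prop) :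
  (forall n, P n 0%N) -> (forall m, \forall n \near \oo, P n m) ->
  exists M : nat -> nat, (forall n, P n (M n)) /\ M n @[n --> \oo] --> \oo.
Proof.
move=> P0 Pev.
have ex0 n : exists m, `[< P n m >] && (m <= n)%N.
  by exists 0%N; rewrite asboolT.
have ub n m : `[< P n m >] && (m <= n)%N -> (m <= n)%N by case/andP.
exists (fun n => ex_maxn (ex0 n) (ub n)); split.
  by move=> n; case: ex_maxnP => m /andP[/asboolP].
apply/cvgnyPge => L; near=> n; case: ex_maxnP => m _; apply; apply/andP; split.
  by apply/asboolP; near: n; exact: Pev.
by near: n; exact: nbhs_infty_ge.
Unshelve. all: by end_near. Qed.

Section HahnBanach.
Variables (R : realType) (X Y : lmodType R) (xi : Y -> X) (u : Y -> R) (p : X -> R).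
Hypotheses (xilin : is_linear_map xi) (ulin : is_linear_map u).
Hypotheses (p_add : forall x y, p (x + y) <= p x + p y)
  (p_scale : forall t x, 0 < t -> p (t *: x) = t * p x).
Hypothesis u_le : forall y, u y <= p (xi y).

Let p0 : p 0 = 0.
Proof. by have := p_scale 0 (ltr0Sn R 1); rewrite scaler0 => h; lra. Qed.

(* Graphs of linear functionals, defined on a subspace of X and dominated
   by p. *)
Definition dominated_graph (S : set (X * R)) : Prop :=
  (forall z w a, S z -> S w -> S (a *: z.1 + w.1, a * z.2 + w.2)) /\
  (forall z, S z -> z.2 <= p z.1).

Let graph_u : set (X * R) := [set z | exists y, z = (xi y, u y)].

Lemma dominated_graph_u : dominated_graph graph_u.
Proof.
split=> [_ _ a [y ->] [y' ->]|_ [y ->]]; last exact: u_le.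
by exists (a *: y + y'); rewrite xilin ulin.
Qed.

Lemma dominated_graph_chain (F : set (set (X * R))) :
  F `<=` (fun A => dominated_graph (A `|` graph_u)) -> total_on F subset ->
  dominated_graph (\bigcup_(A in F) A `|` graph_u).
Proof.
move=> Fdom Ftot.
have common z w : (\bigcup_(A in F) A `|` graph_u) z ->
    (\bigcup_(A in F) A `|` graph_u) w ->
    exists A, [/\ dominated_graph (A `|` graph_u), A `<=` \bigcup_(A in F) A,
      (A `|` graph_u) z & (A `|` graph_u) w].
  move=> [[A FA Az]|uz] [[B FB Bw]|uw].
  - have [AB|BA] := Ftot _ _ FA FB.
      by exists B; split; [exact: Fdom|exact: bigcup_sup|left; apply: AB|left].
    by exists A; split; [exact: Fdom|exact: bigcup_sup|left|left; apply: BA].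
  - by exists A; split; [exact: Fdom|exact: bigcup_sup|left|right].
  - by exists B; split; [exact: Fdom|exact: bigcup_sup|right|left].
  - by exists set0; rewrite set0U; split => //; exact: dominated_graph_u.
split=> [z w a Uz Uw|z Uz].
  have [A [[Alin _] AF Az Aw]] := common z w Uz Uw.
  by case: (Alin z w a Az Aw) => [/AF|?]; [left|right].
by have [A [[_ Ale] _ Az _]] := common z z Uz Uz; exact: Ale.
Qed.

Section Extension.
Variables (S : set (X * R)) (x : X).
Hypotheses (Sdom : dominated_graph S) (S0 : S (0, 0)).

Lemma dominated_graph_functional a b : S (x, a) -> S (x, b) -> a = b.
Proof.
have [Slin Sle] := Sdom; move=> Sa Sb.
have := Sle _ (Slin _ _ (-1) Sa Sb); have := Sle _ (Slin _ _ (-1) Sb Sa).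
rewrite /= scaleN1r addNr p0; lra.
Qed.

Lemma dominated_graph_gap : exists c,
  (forall z, S z -> z.2 - p (z.1 - x) <= c) /\
  (forall w, S w -> c <= p (w.1 + x) - w.2).
Proof.
have [Slin Sle] := Sdom.
pose E := [set z.2 - p (z.1 - x) | z in S].
have E_le w : S w -> ubound E (p (w.1 + x) - w.2).
  move=> Sw _ [z Sz <-].
  have := Sle _ (Slin _ _ 1 Sz Sw); rewrite /= scale1r mul1r.
  have := p_add (z.1 - x) (w.1 + x); rewrite addrACA addNr addr0; lra.
exists (sup E); split => [z Sz|w Sw].
  by apply: ub_le_sup; [exists (p (0 + x) - 0); exact: E_le S0|exists z].
by apply: ge_sup; [exists (0 - p (0 - x)), (0, 0)|exact: E_le].
Qed.

Lemma dominated_graph_extension : exists c,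
  dominated_graph [set w | exists z t, S z /\ w = (z.1 + t *: x, z.2 + t * c)].
Proof.
have [Slin Sle] := Sdom; have [c [c_ge c_le]] := dominated_graph_gap.
have scale_shift (s : R) v w : 0 < s -> s * p (s^-1 *: v + w) = p (v + s *: w).
  by move=> s0; rewrite -p_scale // scalerDr scalerA mulfV ?gt_eqF // scale1r.
exists c; split=> [_ _ a [z [t [Sz ->]]] [z' [t' [Sz' ->]]]|_ [z [t [Sz ->]]]] /=.
  exists (a *: z.1 + z'.1, a * z.2 + z'.2), (a * t + t'); split; first exact: Slin.
  congr (_, _) => /=.
    by rewrite scalerDr scalerA addrACA -scalerDl.
  by rewrite mulrDr mulrA addrACA -mulrDl.
have [t0|t0|->] := ltgtP t 0; last by rewrite scale0r mul0r !addr0; exact: Sle.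
- have s0 : 0 < - t by rewrite oppr_gt0.
  have := c_ge _ (Slin _ _ (- t)^-1 Sz S0); rewrite /= !addr0.
  rewrite -(ler_pM2l s0) mulrBr mulrA mulfV ?gt_eqF // mul1r.
  rewrite scale_shift // scalerN scaleNr opprK; lra.
- have := c_le _ (Slin _ _ t^-1 Sz S0); rewrite /= !addr0.
  rewrite -(ler_pM2l t0) mulrBr mulrA mulfV ?gt_eqF // mul1r scale_shift //; lra.
Qed.

End Extension.

Theorem hahn_banach : exists psi : X -> R,
  [/\ is_linear_map psi, forall y, psi (xi y) = u y & forall x, psi x <= p x].
Proof.
have [A [Adom Amax]] := Zorn_bigcup dominated_graph_chain.
set H := A `|` graph_u.
have H0 : H (0, 0) by right; exists 0; rewrite is_linear_map0 // is_linear_map0.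
have Htotal x : exists a, H (x, a).
  apply: contrapT => Hx; have [c Bdom] := dominated_graph_extension x Adom H0.
  set B := [set w | _] in Bdom.
  have HB : H `<=` B.
    by move=> z Hz; exists z, 0; rewrite scale0r mul0r !addr0 -surjective_pairing.
  apply: (Amax B); last by rewrite (setUidPl _ _).2 // => z uz; apply: HB; right.
  split=> [z Az|/(_ (x, c))]; first by apply: HB; left.
  move=> BA; apply: Hx; exists c; left; apply: BA.
  by exists (0, 0), 1; rewrite scale1r mul1r !add0r.
have [psi Hpsi] := choice Htotal; have [Hlin Hle] := Adom.
exists psi; split=> [a x y|y|x]; last exact: Hle (Hpsi x).
  apply/esym/(dominated_graph_functional Adom (Hlin _ _ a (Hpsi x) (Hpsi y))).
  exact: Hpsi.
by apply: (dominated_graph_functional Adom (Hpsi _)); right; exists y.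
Qed.

End HahnBanach.

Lemma hahn_banach_norm (R : realType) (X Y : normedModType R) (xi : Y -> X)
    (u : Y -> R) (C : R) :
  is_linear_map xi -> is_linear_map u -> 0 <= C ->
  (forall y, `|u y| <= C * `|xi y|) ->
  exists psi : X -> R, [/\ is_linear_map psi, forall y, psi (xi y) = u y &
    forall x, `|psi x| <= C * `|x|].
Proof.
move=> xilin ulin C0 uC.
have p_add (x y : X) : C * `|x + y| <= C * `|x| + C * `|y|.
  by rewrite -mulrDr ler_wpM2l // ler_normD.
have p_scale t (x : X) : 0 < t -> C * `|t *: x| = t * (C * `|x|).
  by move=> t0; rewrite normrZ gtr0_norm // mulrCA.
have u_le y : u y <= C * `|xi y| by apply: le_trans (ler_norm _) (uC y).
have [psi [psilin psixi psile]] := hahn_banach xilin ulin p_add p_scale u_le.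
exists psi; split => // x; rewrite ler_norml psile andbT.
by rewrite lerNl -is_linear_mapN // -(normrN x) psile.
Qed.

Section Annihilators.
Variables (R : realType) (X Y : normedModType R) (xi : Y -> X) (C : R).

Definition bounded_annihilator (k : X -> R) : Prop :=
  [/\ is_linear_map k, forall y, k (xi y) = 0 & forall x, `|k x| <= C * `|x|].

Lemma bounded_annihilator0 : 0 <= C -> bounded_annihilator (fun _ => 0).
Proof.
by move=> C0; split=> [||x]; [exact: is_linear_map_cst0|by []|rewrite normr0 mulr_ge0].
Qed.

End Annihilators.

Section PointwiseTopology.
Import ArrowAsProduct.
Variables (R : realType) (X : normedModType R).

Lemma eval_continuous (x : X) : continuous (fun psi : X -> R => psi x).
Proof. exact: proj_continuous. Qed.

Lemma nbhs_evals (phi : X -> R) (s : seq X) (eps : R) : 0 < eps ->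
  nbhs phi [set psi : X -> R | {in s, forall x, `|psi x - phi x| < eps}].
Proof.
move=> eps0; elim: s => [|x s IHs].
  by apply: (nearW (nbhs_filter phi)) => psi z; rewrite in_nil.
have x_near : nbhs phi [set psi : X -> R | `|phi x - psi x| < eps].
  by have /cvgrPdist_lt /(_ eps eps0) := @eval_continuous x phi.
have phiF : Filter (nbhs phi) := nbhs_filter phi.
apply: filterS (filterI x_near IHs).
move=> psi [phi_x phi_s] z; rewrite in_cons => /orP[/eqP->|/phi_s//].
by rewrite distrC.
Qed.

Lemma cluster_near_evals (F : set_system (X -> R)) (phi : X -> R)
    (A : set (X -> R)) (s : seq X) (eps : R) :
  cluster F phi -> F A -> 0 < eps ->
  exists2 psi, A psi & {in s, forall x, `|psi x - phi x| < eps}.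
Proof.
move=> phiF FA eps0.
by have [psi [Apsi psi_near]] := phiF _ _ FA (nbhs_evals phi s eps0); exists psi.
Qed.

Lemma cluster_is_linear_map (F : set_system (X -> R)) (phi : X -> R) :
  cluster F phi -> F [set psi | is_linear_map psi] -> is_linear_map phi.
Proof.
move=> phiF Flin a u v; rewrite -[a *: phi u]/(a * phi u).
apply/eqP; rewrite -subr_eq0 -normr_le0; apply/unstable.ler_gtP => r r0.
have a2 : 0 < `|a| + 2 by rewrite ltr_wpDl.
have [psi psi_lin psi_near] :=
  cluster_near_evals [:: a *: u + v; u; v] phiF Flin (divr_gt0 r0 a2).
have psi_w : psi (a *: u + v) = a * psi u + psi v := psi_lin a u v.
have := psi_near (a *: u + v); have := psi_near u; have := psi_near v.
rewrite !inE !eqxx !orbT psi_w => /(_ isT) near_v /(_ isT) near_u /(_ isT) near_w.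
have near_au : `|a * (psi u - phi u)| <= `|a| * (r / (`|a| + 2)).
  by rewrite normrM ler_wpM2l // ltW.
have r_eq : r / (`|a| + 2) * (`|a| + 2) = r by rewrite mulfVK ?gt_eqF.
move: near_w near_v near_au; rewrite !ltr_norml ler_norml.
move=> /andP[? ?] /andP[? ?] /andP[? ?].
by rewrite ler_norml; apply/andP; split; lra.
Qed.

Lemma cluster_eval_eq0 (F : set_system (X -> R)) (phi : X -> R) (x : X) :
  cluster F phi -> (forall r, 0 < r -> F [set psi | `|psi x| <= r]) -> phi x = 0.
Proof.
move=> phiF Fx; apply/eqP; rewrite -normr_le0; apply/unstable.ler_gtP => r r0.
have r2 : 0 < r / 2 by rewrite divr_gt0.
have [psi psi_small psi_near] := cluster_near_evals [:: x] phiF (Fx _ r2) r2.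
have := psi_near x; rewrite mem_head => /(_ isT).
move: psi_small; rewrite /= ltr_norml ler_norml => /andP[? ?] /andP[? ?].
by rewrite ler_norml; apply/andP; split; lra.
Qed.

Variables (Y : normedModType R) (xi : Y -> X) (C : R).

Lemma near_bounded_annihilator (h : nat -> X -> R) (s : seq X) (eps : R) :
  0 <= C -> 0 < eps ->
  (forall n, is_linear_map (h n)) -> (forall n x, `|h n x| <= C * `|x|) ->
  (forall y, h n (xi y) @[n --> \oo] --> 0) ->
  \forall n \near \oo, exists2 k, bounded_annihilator xi C k &
    {in s, forall x, `|h n x - k x| < eps}.
Proof.
(* Otherwise a cluster point of h along the bad indices would be a bounded
   annihilator approximated by some bad h n. *)
move=> C0 eps0 hlin hC hxi; apply: contrapT => not_near.
pose good n := exists2 k, bounded_annihilator xi C k &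
  {in s, forall x, `|h n x - k x| < eps}.
have bad_ne : ~ within (~` good) \oo set0.
  rewrite /within /= => bad0; apply: not_near; apply: filterS bad0 => n.
  exact: contrapT.
have bad_proper : ProperFilter (within (~` good) \oo).
  exact: Build_ProperFilter bad_ne (within_filter _ _).
pose G := h @ within (~` good) \oo.
have G_all A : (forall n, A (h n)) -> G A by move=> hA; apply: nearW => n _.
have bounded_seg (x : X) : compact `[- (C * `|x|), C * `|x|] by exact: segment_compact.
have [|phi [phi_bd phiG]] := tychonoff bounded_seg (fmap_proper_filter h bad_proper).
  by apply: G_all => n x; rewrite /= in_itv /= -ler_norml.
have phi_lin : is_linear_map phi := cluster_is_linear_map phiG (G_all _ hlin).
have phi_xi y : phi (xi y) = 0.
  apply: cluster_eval_eq0 phiG _ => r r0.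
  by apply: cvg_within; exact: cvgr0_norm_le _ (hxi y) _ r0.
have phi_ann : bounded_annihilator xi C phi.
  by split=> // x; have := phi_bd x; rewrite /= in_itv /= -ler_norml.
have G_bad : G [set psi | exists2 n, ~ good n & psi = h n].
  by apply: nearW => n bad_n; exists n.
have [_ [n bad_n ->] hn_near] := cluster_near_evals s phiG G_bad eps0.
by apply: bad_n; exists phi.
Qed.

End PointwiseTopology.

Lemma bounded_annihilator_approx (R : realType) (X Y : normedModType R) (xi : Y -> X)
    (C : R) (e : nat -> X) (h : nat -> X -> R) :
  0 <= C -> (forall n, is_linear_map (h n)) -> (forall n x, `|h n x| <= C * `|x|) ->
  (forall y, h n (xi y) @[n --> \oo] --> 0) ->
  exists k : nat -> X -> R, (forall n, bounded_annihilator xi C (k n)) /\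
    forall i, h n (e i) - k n (e i) @[n --> \oo] --> 0.
Proof.
move=> C0 hlin hC hxi.
pose approx n m := exists2 k, bounded_annihilator xi C k &
  forall i, (i < m)%N -> `|h n (e i) - k (e i)| < m.+1%:R^-1.
have [|m|M [approxM M_infty]] := @diagonal_index approx.
- by move=> n; exists (fun _ => 0); [exact: bounded_annihilator0|].
- have m_pos : 0 < m.+1%:R^-1 :> R by rewrite invr_gt0.
  have := near_bounded_annihilator (map e (iota 0 m)) C0 m_pos hlin hC hxi.
  apply: filterS => n [k k_ann k_near]; exists k => // i im.
  by apply: k_near; apply: map_f; rewrite mem_iota.
have /choice[k kP] : forall n, exists k, bounded_annihilator xi C k /\
    forall i, (i < M n)%N -> `|h n (e i) - k (e i)| < (M n).+1%:R^-1.
  by move=> n; have [k ? ?] := approxM n; exists k.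
exists k; split=> [n|i]; first by case: (kP n).
apply/cvgrPdist_lt => eps eps0.
have /M_infty M_near : \forall m \near \oo, (i < m)%N /\ m.+1%:R^-1 < eps.
  near=> m; split; first by near: m; exact: nbhs_infty_gt.
  rewrite -[eps]invrK ltf_pV2 ?posrE ?invr_gt0 ?ltr0Sn //.
  apply: (@lt_trans _ _ m%:R); last by rewrite ltr_nat.
  by near: m; exact: nbhs_infty_gtr.
near=> n; rewrite sub0r normrN.
have [iM Meps] : (i < M n)%N /\ (M n).+1%:R^-1 < eps by near: n; exact: M_near.
by have [_ kn] := kP n; exact: lt_trans (kn i iM) Meps.
Unshelve. all: by end_near. Qed.

Section WeakStarLift.
Variables (R : realType) (X : completeNormedModType R) (Y : normedModType R).
Variable xi : Y -> X.
Hypotheses (Xsep : separable X) (xilin : is_linear_map xi).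
Hypotheses (xiiso : forall y, `|xi y| = `|y|) (xicl : closed (range xi)).

Let xi_cont : continuous xi.
Proof.
by apply: (linear_norm_le_continuous xilin (C := 1)) => y; rewrite xiiso mul1r.
Qed.

Lemma weak_star_lift (f : X -> R) (g : nat -> Y -> R) :
  is_dual f -> (forall n, is_dual (g n)) ->
  (forall y, g n y @[n --> \oo] --> f (xi y)) ->
  exists fs : nat -> X -> R, [/\ forall n, is_dual (fs n), forall n, fs n \o xi = g n &
    forall x, fs n x @[n --> \oo] --> f x].
Proof.
move=> fd gd g_cvg.
pose u n := g n \- (f \o xi).
have ud n : is_dual (u n) := is_dual_sub (gd n) (is_dual_comp fd xilin xi_cont).
have u_cvg0 y : u n y @[n --> \oo] --> 0 by apply/subr_cvg0; exact: g_cvg.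
have [C C0 uC] : exists2 C, 0 < C & forall n y, `|u n y| <= C * `|y|.
  apply: (uniform_boundedness (isometry_closed_range_complete xilin xiiso xicl)).
  - by move=> n; case: (ud n).
  - by move=> n; case: (ud n).
  - move=> y; have /cvg_seq_bounded[M [_ uM]] : cvgn (u^~ y).
      by apply/cvg_ex; exists 0; exact: u_cvg0.
    by exists (M + 1) => n; apply: (uM (M + 1)); rewrite ?ltrDl.
have /choice[h hP] n : exists h : X -> R, [/\ is_linear_map h,
    forall y, h (xi y) = u n y & forall x, `|h x| <= C * `|x|].
  have [ulin _] := ud n.
  by apply: (hahn_banach_norm xilin ulin (ltW C0)) => y; rewrite xiiso.
have hlin n : is_linear_map (h n) by case: (hP n).
have hxi n y : h n (xi y) = u n y by case: (hP n).
have hC n x : `|h n x| <= C * `|x| by case: (hP n).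
have h_cvg0 y : h n (xi y) @[n --> \oo] --> 0.
  by rewrite (funext (hxi^~ y)); exact: u_cvg0.
have [e edense] := separable_dense_seq Xsep.
have [k [k_ann k_cvg]] := bounded_annihilator_approx e (ltW C0) hlin hC h_cvg0.
pose w n := h n \- k n.
have wlin n : is_linear_map (w n).
  by have [klin _ _] := k_ann n; exact: is_linear_map_sub.
have wC n x : `|w n x| <= (C + C) * `|x|.
  have [_ _ kC] := k_ann n; rewrite mulrDl.
  by apply: (le_trans (ler_normB _ _)); exact: lerD.
have w_cvg0 := equibounded_cvg0_dense edense wlin wC k_cvg.
exists (fun n => f \+ w n); split=> [n|n|x].
- by apply: is_dual_add fd _; exact: is_dual_le_norm (wlin n) (wC n).
- apply/funext => y /=; have [_ kxi _] := k_ann n.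
  by rewrite /w /= hxi kxi /u /= subr0 addrC subrK.
- by have := cvgD (cvg_cst (f x)) (w_cvg0 x); rewrite addr0; apply.
Qed.

Lemma adj_preimage_wstar_derived1 (S : set (Y -> R)) : S `<=` @is_dual R Y ->
  adj_preimage xi (wstar_derived1 S) = wstar_derived1 (adj_preimage xi S).
Proof.
move=> Sd; apply/seteqP; split=> f /=.
- move=> [fd [_ [g [gS g_cvg]]]].
  have [fs [fsd fsxi fs_cvg]] := weak_star_lift fd (fun n => Sd _ (gS n)) g_cvg.
  by split=> //; exists fs; split=> // n; split; rewrite ?fsxi.
- move=> [fd [fs [fsS fs_cvg]]]; split=> //.
  split; first exact: is_dual_comp fd xilin xi_cont.
  by exists (fun n => fs n \o xi); split=> [n|y]; [case: (fsS n)|exact: fs_cvg].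
Qed.

End WeakStarLift.

Lemma wstar_derived_unfold (R : realType) (V : normedModType R) (O : Type)
    (lt : O -> O -> Prop) (wf : well_founded lt) (G : set (V -> R)) (a : O) :
  wstar_derived wf G a = [set f | ((forall b, ~ lt b a) /\ G f) \/
    exists b (h : lt b a), wstar_derived1 (wstar_derived wf G b) f].
Proof.
rewrite /wstar_derived Fix_eq // => x f1 f2 f12.
by have -> : f1 = f2 by apply: functional_extensionality_dep => b; apply: funext.
Qed.

Lemma wstar_derived_dual (R : realType) (V : normedModType R) (O : Type)
    (lt : O -> O -> Prop) (wf : well_founded lt) (G : set (V -> R)) (a : O) :
  G `<=` @is_dual R V -> wstar_derived wf G a `<=` @is_dual R V.
Proof.
by move=> Gd f; rewrite wstar_derived_unfold => -[[_ /Gd]|[b [_ []]]].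
Qed.

Theorem lemma1 (R : realType) (X : completeNormedModType R) (Y : normedModType R)
  (xi : Y -> X) (Gamma : set (Y -> R))
  (O : Type) (lt : O -> O -> Prop) (wf : well_founded lt) (alpha : O) :
  strict_well_order lt ->
  separable X ->
  is_linear_map xi -> (forall y : Y, `|xi y| = `|y|) -> closed (range xi) ->
  dual_subspace Gamma ->
  adj_preimage xi (wstar_derived wf Gamma alpha) =
  wstar_derived wf (adj_preimage xi Gamma) alpha.
Proof.
move=> _ Xsep xilin xiiso xicl [Gamma_dual _].
elim/(well_founded_induction wf): alpha => a IH.
rewrite !wstar_derived_unfold; apply/seteqP; split=> f /=.
- case=> fd [[a_min Gf]|[b [ba Df]]]; [by left|right; exists b, ba].
  rewrite -IH // -adj_preimage_wstar_derived1 //; last exact: wstar_derived_dual.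
- case=> [[a_min [fd Gf]]|[b [ba]]]; first by split=> //; left.
  rewrite -IH // -adj_preimage_wstar_derived1 //; last exact: wstar_derived_dual.
  by case=> fd Df; split=> //; right; exists b, ba.
Qed.
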